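(* Suppose Assumption 1 holds. Let $N\ge 1$, let $\Phi_N:\Xi\to\mathbb{R}^N$ be any feature map and let $W^\star(x)$ be a minimizer of $G_{\Phi_N}(x,\cdot)$. Then for every $x\in\mathbb{R}^{d_x}$, $$\|\nabla F(x)-\nabla F_{\Phi_N}(x)\|\le K\cdot \mathbb{E}_{\xi\sim\mathbb{P}_\xi}\big\|W^\star(x)\Phi_N(\xi)-y^\star(x,\xi)\big\|,$$ where $K = L_{f,1} + \frac{L_{g,2} L_{f,0}}{\mu} + \frac{L_{g,2} L_{g,1} L_{f,0}}{\mu^2} + \frac{L_{f,1} L_{g, 1}}{\mu}$.
   Context: Setting. Let $d_x,d_y,d_\xi,d_\eta\ge 1$. Let $(\xi,\eta)$ be a random vector in $\mathbb{R}^{d_\xi}\times\mathbb{R}^{d_\eta}$ with joint law $\mathbb{P}_{(\xi,\eta)}$; $\mathbb{P}_\xi$ is the marginal law of $\xi$, with support $\Xi\subseteq\mathbb{R}^{d_\xi}$, and $\mathbb{P}_{\eta|\xi}$ the conditional law of $\eta$ given $\xi$. Let $f,g:\mathbb{R}^{d_x}\times\mathbb{R}^{d_y}\times\Xi\times\mathbb{R}^{d_\eta}\to\mathbb{R}$ be twice differentiable in $(x,y)$. Put $G(x,y,\xi)=\mathbb{E}_{\eta\sim\mathbb{P}_{\eta|\xi}}[g(x,y,\xi,\eta)]$, $y^\star(x,\xi)=\arg\min_{y\in\mathbb{R}^{d_y}}G(x,y,\xi)$, and $F(x)=\mathbb{E}_{(\xi,\eta)}[f(x,y^\star(x,\xi),\xi,\eta)]$.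 $\nabla_1,\nabla_2$ denote partial gradients in $x$ and $y$; $\nabla^2_{12},\nabla^2_{22}$ the corresponding blocks of the Hessian. $\|\cdot\|$ is the Euclidean norm for vectors and the spectral norm for matrices. The variance of a random vector/matrix $X$ is $\mathbb{E}\|X-\mathbb{E}X\|^2$. Assumption 1: (i) $f,\nabla f,\nabla g,\nabla^2 g$ (derivatives in $(x,y)$) are $L_{f,0},L_{f,1},L_{g,1},L_{g,2}$-Lipschitz in $(x,y)$ for every fixed $(\xi,\eta)$; (ii) $g$ is $\mu$-strongly convex in $y$ ($\mu>0$) for all $(x,\xi,\eta)$; (iii) for $\eta\sim\mathbb{P}_{\eta|\xi}$, $\nabla f,\nabla g,\nabla^2 g$ are unbiased estimators of the corresponding derivatives of $\mathbb{E}_{\eta|\xi}f$, $G$, with (conditional) variances bounded by $\sigma_f^2,\sigma_{g,1}^2,\sigma_{g,2}^2$ uniformly in $x,y,\xi$. Basis notation. For a feature map $\Phi_N:\Xi\to\mathbb{R}^N$ and $W\in\mathbb{R}^{d_y\times N}$, set $f_{\Phi_N}(x,W,\xi,\eta)=f(x,W\Phi_N(\xi),\xi,\eta)$, $g_{\Phi_N}(x,W,\xi,\eta)=g(x,W\Phi_N(\xi),\xi,\eta)$, $G_{\Phi_N}(x,W)=\mathbb{E}_{(\xi,\eta)}[g_{\Phi_N}(x,W,\xi,\eta)]$, $W^\star(x)\in\arg\min_W G_{\Phi_N}(x,W)$, $F_{\Phi_N}(x)=\mathbb{E}_{(\xi,\eta)}[f_{\Phi_N}(x,W^\star(x),\xi,\eta)]$.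 Hypergradients. Here $\nabla F(x)$ and $\nabla F_{\Phi_N}(x)$ denote $\nabla F(x)=\mathbb{E}_{(\xi,\eta)}\big[\nabla_1 f(x,\bar y,\xi,\eta)-\nabla^2_{12}g(x,\bar y,\xi,\eta)[\nabla^2_{22}g(x,\bar y,\xi,\eta)]^{-1}\nabla_2 f(x,\bar y,\xi,\eta)\big]$ with $\bar y=y^\star(x,\xi)$, and $\nabla F_{\Phi_N}(x)$ is the same expression with $\bar y=W^\star(x)\Phi_N(\xi)$. *)

From HB Require Import structures.
From mathcomp Require Import all_boot all_order all_algebra.
From mathcomp Require Import all_classical all_reals all_analysis.
Set Implicit Arguments. Unset Strict Implicit. Unset Printing Implicit Defensive.
Import Order.TTheory GRing.Theory Num.Theory.
Import numFieldNormedType.Exports.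
Local Open Scope classical_set_scope.
Local Open Scope ring_scope.

Section Defs.
Variable R : realType.

Definition enorm n (v : 'cV[R]_n) : R := Num.sqrt (\sum_i (v i ord0) ^+ 2).

Definition vdot n (u v : 'cV[R]_n) : R := (u^T *m v) ord0 ord0.

Definition specnorm m n (A : 'M[R]_(m, n)) : R :=
  sup [set enorm (A *m v) | v in [set v : 'cV[R]_n | enorm v <= 1]].

Definition stack dx dy (x : 'cV[R]_dx) (y : 'cV[R]_dy) : 'cV[R]_(dx + dy) :=
  col_mx x y.

Definition is_gradient dx dy (F : 'cV[R]_dx -> 'cV[R]_dy -> R)
    (D : 'cV[R]_dx -> 'cV[R]_dy -> 'cV[R]_(dx + dy)) : Prop :=
  forall (x : 'cV[R]_dx) (y : 'cV[R]_dy),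
    differentiable (fun p : 'cV[R]_dx * 'cV[R]_dy => F p.1 p.2) (x, y) /\
    forall h : 'cV[R]_dx * 'cV[R]_dy,
      'd (fun p : 'cV[R]_dx * 'cV[R]_dy => F p.1 p.2) (x, y) h
        = vdot (D x y) (stack h.1 h.2).

(* [J] is the Jacobian (in (x,y)) of the vector field [V]; when V is a
   gradient, J is the Hessian. *)
Definition is_jacobian dx dy k (V : 'cV[R]_dx -> 'cV[R]_dy -> 'cV[R]_k)
    (J : 'cV[R]_dx -> 'cV[R]_dy -> 'M[R]_(k, dx + dy)) : Prop :=
  forall (x : 'cV[R]_dx) (y : 'cV[R]_dy),
    differentiable (fun p : 'cV[R]_dx * 'cV[R]_dy => V p.1 p.2) (x, y) /\
    forall h : 'cV[R]_dx * 'cV[R]_dy,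
      'd (fun p : 'cV[R]_dx * 'cV[R]_dy => V p.1 p.2) (x, y) h
        = J x y *m stack h.1 h.2.

Definition lipschitz_xy dx dy (F : 'cV[R]_dx -> 'cV[R]_dy -> R) (L : R) :=
  forall x x' y y', `|F x y - F x' y'| <= L * enorm (stack (x - x') (y - y')).

Definition lipschitz_xy_vec dx dy k
    (F : 'cV[R]_dx -> 'cV[R]_dy -> 'cV[R]_k) (L : R) :=
  forall x x' y y',
    enorm (F x y - F x' y') <= L * enorm (stack (x - x') (y - y')).

Definition lipschitz_xy_mat dx dy k l
    (F : 'cV[R]_dx -> 'cV[R]_dy -> 'M[R]_(k, l)) (L : R) :=
  forall x x' y y',
    specnorm (F x y - F x' y') <= L * enorm (stack (x - x') (y - y')).

Definition strongly_convex_y dy (G : 'cV[R]_dy -> R) (mu : R) :=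
  forall (y1 y2 : 'cV[R]_dy) (t : R), 0 <= t <= 1 ->
    G (t *: y1 + (1 - t) *: y2)
      <= t * G y1 + (1 - t) * G y2 - mu / 2 * t * (1 - t) * enorm (y1 - y2) ^+ 2.

Definition Evec d (T : measurableType d) (P : probability T R) n
    (h : T -> 'cV[R]_n) : 'cV[R]_n :=
  \col_i Rintegral P setT (fun t => h t i ord0).

Definition Emat d (T : measurableType d) (P : probability T R) m n
    (h : T -> 'M[R]_(m, n)) : 'M[R]_(m, n) :=
  \matrix_(i, j) Rintegral P setT (fun t => h t i j).

(* The integrand of the hypergradient formula:
   grad_1 f - grad^2_12 g [grad^2_22 g]^-1 grad_2 f, built from the full
   gradient Df of f and the full Hessian Hg of g in (x,y). *)
Definition hyper_integrand dx dy (Df : 'cV[R]_(dx + dy))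
    (Hg : 'M[R]_(dx + dy)) : 'cV[R]_dx :=
  usubmx Df - ursubmx Hg *m invmx (drsubmx Hg) *m dsubmx Df.

End Defs.

Section Hyper.
Variable R : realType.
(* The hypergradient E_{(xi,eta)}[ hyper_integrand at ybar(xi) ], where the
   inner variable is ybar(xi) (y*(x,xi) for F, W*(x) Phi_N(xi) for F_Phi). *)
Definition hypergrad d1 d2 (T1 : measurableType d1) (T2 : measurableType d2)
    (P : probability (T1 * T2)%type R) dx dy
    (Df : 'cV[R]_dx -> 'cV[R]_dy -> T1 -> T2 -> 'cV[R]_(dx + dy))
    (Hg : 'cV[R]_dx -> 'cV[R]_dy -> T1 -> T2 -> 'M[R]_(dx + dy))
    (ybar : T1 -> 'cV[R]_dy) (x : 'cV[R]_dx) : 'cV[R]_dx :=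
  Evec P (fun p => hyper_integrand (Df x (ybar p.1) p.1 p.2)
                                   (Hg x (ybar p.1) p.1 p.2)).
End Hyper.

From HB Require Import structures.
From mathcomp Require Import all_boot all_order all_algebra.
From mathcomp Require Import all_classical all_reals all_analysis.
From mathcomp Require Import ring lra.
Set Implicit Arguments. Unset Strict Implicit. Unset Printing Implicit Defensive.
Import Order.TTheory GRing.Theory Num.Theory.
Import numFieldNormedType.Exports.
Local Open Scope classical_set_scope.
Local Open Scope ring_scope.

(* The hypergradient integrand [u - A M^-1 c], where [u], [c] are the x- and
   y-blocks of the gradient of f and [A], [M] the xy- and yy-blocks of the
   Hessian of g, is Lipschitz in the inner variable with constant K, for every
   fixed (xi, eta): the gradient of f is bounded by L_{f,0} because f is
   L_{f,0}-Lipschitz, the xy-block of the Hessian by L_{g,1}, strong convexity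
   makes [M] coercive so that [M^-1] has norm at most 1/mu, and
   [M1^-1 - M2^-1 = M1^-1 (M2 - M1) M2^-1].  The norm of an expectation is at
   most the expectation of the norm, which gives the theorem. *)

Section EuclideanNorm.
Variable R : realType.

Lemma vdotE n (u v : 'cV[R]_n) : vdot u v = \sum_i u i ord0 * v i ord0.
Proof. by rewrite /vdot mxE; apply: eq_bigr => i _; rewrite mxE. Qed.

Lemma vdotC n (u v : 'cV[R]_n) : vdot u v = vdot v u.
Proof. by rewrite !vdotE; apply: eq_bigr => i _; rewrite mulrC. Qed.

Lemma vdotDl n (u v w : 'cV[R]_n) : vdot (u + v) w = vdot u w + vdot v w.
Proof. by rewrite !vdotE -big_split; apply: eq_bigr => i _; rewrite !mxE mulrDl. Qed.

Lemma vdotZl n a (u w : 'cV[R]_n) : vdot (a *: u) w = a * vdot u w.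
Proof. by rewrite !vdotE mulr_sumr; apply: eq_bigr => i _; rewrite !mxE mulrA. Qed.

Lemma vdotZr n a (u w : 'cV[R]_n) : vdot u (a *: w) = a * vdot u w.
Proof. by rewrite vdotC vdotZl vdotC. Qed.

Lemma vdotBl n (u v w : 'cV[R]_n) : vdot (u - v) w = vdot u w - vdot v w.
Proof. by rewrite vdotDl -scaleN1r vdotZl mulN1r. Qed.

Lemma vdot_ge0 n (u : 'cV[R]_n) : 0 <= vdot u u.
Proof. by rewrite vdotE; apply: sumr_ge0 => i _; rewrite -expr2 sqr_ge0. Qed.

Lemma vdot_eq0 n (u : 'cV[R]_n) : vdot u u = 0 -> u = 0.
Proof.
rewrite vdotE => /eqP; rewrite psumr_eq0 => [/allP u0|i _]; last first.
  by rewrite -expr2 sqr_ge0.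
apply/matrixP => i j; rewrite (ord1 j) mxE.
by have /= := u0 i (mem_index_enum _); rewrite mulf_eq0 orbb => /eqP.
Qed.

Lemma vdot_col0mx m n (u : 'cV[R]_(m + n)) (w : 'cV[R]_n) :
  vdot u (col_mx 0 w) = vdot (dsubmx u) w.
Proof.
rewrite !vdotE big_split_ord /= big1 ?add0r.
  by apply: eq_bigr => i _; rewrite col_mxEd mxE.
by move=> i _; rewrite col_mxEu mxE mulr0.
Qed.

Lemma lagrange_identity n (u v : 'cV[R]_n) :
  \sum_i \sum_j (u i ord0 * v j ord0 - u j ord0 * v i ord0) ^+ 2
  = 2 * (vdot u u * vdot v v) - 2 * vdot u v ^+ 2.
Proof.
rewrite !vdotE; set a := fun i => u i ord0; set b := fun i => v i ord0.
have e1 : (\sum_i a i * a i) * (\sum_i b i * b i) = \sum_i \sum_j a i ^+ 2 * b j ^+ 2.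
  rewrite mulr_suml; apply: eq_bigr => i _; rewrite mulr_sumr.
  by apply: eq_bigr => j _; rewrite !expr2.
have e2 : (\sum_i a i * a i) * (\sum_i b i * b i) = \sum_i \sum_j a j ^+ 2 * b i ^+ 2.
  by rewrite e1 exchange_big.
have e3 : (\sum_i a i * b i) ^+ 2 = \sum_i \sum_j a i * b i * (a j * b j).
  rewrite expr2 mulr_suml; apply: eq_bigr => i _; rewrite mulr_sumr.
  by apply: eq_bigr => j _.
have -> : forall X Y : R, 2 * X - 2 * Y = X + X - 2 * Y by move=> X Y; ring.
rewrite {1}e1 e2 e3 mulr_sumr -big_split -sumrB /=.
apply: eq_bigr => i _; rewrite mulr_sumr -big_split -sumrB /=.
by apply: eq_bigr => j _; rewrite /a /b; ring.
Qed.

Lemma vdot_sqr_le n (u v : 'cV[R]_n) : vdot u v ^+ 2 <= vdot u u * vdot v v.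
Proof.
have : 0 <= \sum_i \sum_j (u i ord0 * v j ord0 - u j ord0 * v i ord0) ^+ 2.
  by apply: sumr_ge0 => i _; apply: sumr_ge0 => j _; apply: sqr_ge0.
rewrite lagrange_identity; lra.
Qed.

Lemma enormE n (u : 'cV[R]_n) : enorm u = Num.sqrt (vdot u u).
Proof. by rewrite /enorm vdotE; congr Num.sqrt; apply: eq_bigr => i _; rewrite expr2. Qed.

Lemma enorm_ge0 n (u : 'cV[R]_n) : 0 <= enorm u.
Proof. by rewrite enormE sqrtr_ge0. Qed.

Lemma enorm_sqr n (u : 'cV[R]_n) : enorm u ^+ 2 = vdot u u.
Proof. by rewrite enormE sqr_sqrtr // vdot_ge0. Qed.

Lemma enorm0 n : enorm (0 : 'cV[R]_n) = 0.
Proof. by rewrite enormE -(scale0r 0) vdotZl mul0r sqrtr0. Qed.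

Lemma enorm_eq0 n (u : 'cV[R]_n) : enorm u = 0 -> u = 0.
Proof. by move=> u0; apply: vdot_eq0; rewrite -enorm_sqr u0 expr0n. Qed.

Lemma enorm_gt0 n (u : 'cV[R]_n) : enorm u != 0 -> 0 < enorm u.
Proof. by move=> u0; rewrite lt_def u0 enorm_ge0. Qed.

Lemma vdot_le n (u v : 'cV[R]_n) : vdot u v <= enorm u * enorm v.
Proof.
apply: le_trans (ler_norm _) _.
rewrite !enormE -sqrtrM ?vdot_ge0 // -(sqrtr_sqr (vdot u v)).
by rewrite ler_sqrt ?vdot_sqr_le // mulr_ge0 ?vdot_ge0.
Qed.

Lemma enormD n (u v : 'cV[R]_n) : enorm (u + v) <= enorm u + enorm v.
Proof.
rewrite -(ler_pXn2r (_ : (0 < 2)%N)) ?nnegrE ?addr_ge0 ?enorm_ge0 //.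
rewrite enorm_sqr vdotDl (vdotC u) (vdotC v) !vdotDl (vdotC v u).
have := vdot_le u v; have := enorm_sqr u; have := enorm_sqr v; nra.
Qed.

Lemma enormZ n a (u : 'cV[R]_n) : enorm (a *: u) = `|a| * enorm u.
Proof. by rewrite !enormE vdotZl vdotZr mulrA -expr2 sqrtrM ?sqr_ge0 // sqrtr_sqr. Qed.

Lemma enormN n (u : 'cV[R]_n) : enorm (- u) = enorm u.
Proof. by rewrite -scaleN1r enormZ normrN normr1 mul1r. Qed.

Lemma enormB n (u v : 'cV[R]_n) : enorm (u - v) <= enorm u + enorm v.
Proof. by rewrite -(enormN v) enormD. Qed.

Lemma enorm_col_mx m n (u : 'cV[R]_m) (w : 'cV[R]_n) :
  enorm (col_mx u w) ^+ 2 = enorm u ^+ 2 + enorm w ^+ 2.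
Proof.
rewrite !enorm_sqr !vdotE big_split_ord /=.
by congr (_ + _); apply: eq_bigr => i _; rewrite ?col_mxEu ?col_mxEd.
Qed.

Lemma enorm_usubmx m n (u : 'cV[R]_(m + n)) : enorm (usubmx u) <= enorm u.
Proof.
rewrite -{2}(vsubmxK u) -(ler_pXn2r (_ : (0 < 2)%N)) ?nnegrE ?enorm_ge0 //.
by rewrite enorm_col_mx lerDl sqr_ge0.
Qed.

Lemma enorm_dsubmx m n (u : 'cV[R]_(m + n)) : enorm (dsubmx u) <= enorm u.
Proof.
rewrite -{2}(vsubmxK u) -(ler_pXn2r (_ : (0 < 2)%N)) ?nnegrE ?enorm_ge0 //.
by rewrite enorm_col_mx lerDr sqr_ge0.
Qed.

Lemma enorm_col0mx m n (w : 'cV[R]_n) : enorm (col_mx (0 : 'cV[R]_m) w) = enorm w.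
Proof.
apply/eqP; rewrite -(eqrXn2 (_ : (0 < 2)%N)) ?enorm_ge0 //.
by rewrite enorm_col_mx enorm0 expr0n add0r.
Qed.

Lemma enorm_colmx0 m n (u : 'cV[R]_m) : enorm (col_mx u (0 : 'cV[R]_n)) = enorm u.
Proof.
apply/eqP; rewrite -(eqrXn2 (_ : (0 < 2)%N)) ?enorm_ge0 //.
by rewrite enorm_col_mx enorm0 expr0n addr0.
Qed.
End EuclideanNorm.


Section OperatorBound.
Variable R : realType.

Definition op_bounded m n (A : 'M[R]_(m, n)) (c : R) :=
  forall v, enorm (A *m v) <= c * enorm v.

Definition frobenius m n (A : 'M[R]_(m, n)) : R :=
  Num.sqrt (\sum_i \sum_j A i j ^+ 2).

Lemma op_bounded_frobenius m n (A : 'M[R]_(m, n)) : op_bounded A (frobenius A).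
Proof.
have sum_ge0 : 0 <= \sum_i \sum_j A i j ^+ 2.
  by apply: sumr_ge0 => i _; apply: sumr_ge0 => j _; apply: sqr_ge0.
move=> v; rewrite !enormE /frobenius -sqrtrM // ler_sqrt ?mulr_ge0 ?vdot_ge0 //.
rewrite vdotE mulr_suml; apply: ler_sum => i _.
pose r : 'cV[R]_n := \col_j A i j.
have -> : (A *m v) i ord0 = vdot r v.
  by rewrite vdotE mxE; apply: eq_bigr => j _; rewrite mxE.
have -> : \sum_j A i j ^+ 2 = vdot r r.
  by rewrite vdotE; apply: eq_bigr => j _; rewrite mxE expr2.
by rewrite -expr2 vdot_sqr_le.
Qed.

Lemma le_specnorm m n (A : 'M[R]_(m, n)) v :
  enorm v <= 1 -> enorm (A *m v) <= specnorm A.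
Proof.
move=> v1; apply: ub_le_sup; last by exists v.
exists (frobenius A) => _ [w /= w1 <-].
apply: le_trans (op_bounded_frobenius A w) _; rewrite -[leRHS]mulr1.
by rewrite ler_wpM2l ?sqrtr_ge0.
Qed.

Lemma specnorm_ge0 m n (A : 'M[R]_(m, n)) : 0 <= specnorm A.
Proof. by have := @le_specnorm _ _ A 0; rewrite mulmx0 !enorm0; apply. Qed.

Lemma op_bounded_specnorm m n (A : 'M[R]_(m, n)) : op_bounded A (specnorm A).
Proof.
move=> v; have [v0|vn0] := eqVneq (enorm v) 0.
  by rewrite (enorm_eq0 v0) mulmx0 !enorm0 mulr0.
have vp := enorm_gt0 vn0.
have := @le_specnorm _ _ A ((enorm v)^-1 *: v).
rewrite -scalemxAr !enormZ ger0_norm ?invr_ge0 ?enorm_ge0 // mulVf // lexx.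
by rewrite ler_pdivrMl // mulrC => /(_ isT).
Qed.

Lemma op_boundedW m n (A : 'M[R]_(m, n)) a b : op_bounded A a -> a <= b -> op_bounded A b.
Proof. by move=> Aa ab v; apply: le_trans (Aa v) _; rewrite ler_wpM2r ?enorm_ge0. Qed.

Lemma op_bounded_mul m n (A : 'M[R]_(m, n)) a v b :
  0 <= a -> op_bounded A a -> enorm v <= b -> enorm (A *m v) <= a * b.
Proof. by move=> a0 Aa vb; apply: le_trans (Aa v) _; apply: ler_wpM2l. Qed.

Lemma op_boundedM m n p (A : 'M[R]_(m, n)) (B : 'M[R]_(n, p)) a b :
  0 <= a -> op_bounded A a -> op_bounded B b -> op_bounded (A *m B) (a * b).
Proof. by move=> a0 Aa Bb v; rewrite -mulmxA -mulrA; apply: op_bounded_mul. Qed.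

Lemma op_boundedN m n (A : 'M[R]_(m, n)) a : op_bounded A a -> op_bounded (- A) a.
Proof. by move=> Aa v; rewrite mulNmx enormN. Qed.

Lemma ursubmx_mul m n (A : 'M[R]_(m + n)) (w : 'cV[R]_n) :
  ursubmx A *m w = usubmx (A *m col_mx 0 w).
Proof. by rewrite -mul_usub_mx -[usubmx A]hsubmxK mul_row_col mulmx0 add0r. Qed.

Lemma drsubmx_mul m n (A : 'M[R]_(m + n)) (w : 'cV[R]_n) :
  drsubmx A *m w = dsubmx (A *m col_mx 0 w).
Proof. by rewrite -mul_dsub_mx -[dsubmx A]hsubmxK mul_row_col mulmx0 add0r. Qed.

Lemma op_bounded_ursubmx m n (A : 'M[R]_(m + n)) c :
  op_bounded A c -> op_bounded (ursubmx A) c.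
Proof.
move=> Ac w; rewrite ursubmx_mul.
by apply: le_trans (enorm_usubmx _) _; rewrite -(enorm_col0mx m w).
Qed.

Lemma op_bounded_drsubmx m n (A : 'M[R]_(m + n)) c :
  op_bounded A c -> op_bounded (drsubmx A) c.
Proof.
move=> Ac w; rewrite drsubmx_mul.
by apply: le_trans (enorm_dsubmx _) _; rewrite -(enorm_col0mx m w).
Qed.

Lemma coercive_invmx n (M : 'M[R]_n) mu : 0 < mu ->
  (forall h, mu * enorm h ^+ 2 <= vdot (M *m h) h) ->
  M \in unitmx /\ op_bounded (invmx M) mu^-1.
Proof.
move=> mu0 Mc.
have Mlow h : mu * enorm h <= enorm (M *m h).
  have [h0|hn0] := eqVneq (enorm h) 0; first by rewrite h0 mulr0 enorm_ge0.
  rewrite -(ler_pM2r (enorm_gt0 hn0)) -mulrA -expr2.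
  exact: le_trans (Mc h) (vdot_le _ _).
have Mu : M \in unitmx.
  rewrite -unitmx_tr -row_free_unit; apply: inj_row_free => v vM.
  have Mv : M *m v^T = 0 by rewrite -(trmxK (M *m v^T)) trmx_mul trmxK vM trmx0.
  have vT0 : enorm v^T <= 0 by rewrite -(pmulr_rle0 _ mu0) -(enorm0 R n) -Mv Mlow.
  have /enorm_eq0 v0 : enorm v^T = 0.
    by apply/le_anti; rewrite vT0 enorm_ge0.
  by rewrite -(trmxK v) v0 trmx0.
split => // u; have := Mlow (invmx M *m u); rewrite mulmxA mulmxV // mul1mx.
by rewrite -ler_pdivlMl // mulrC.
Qed.
End OperatorBound.

Section Differentials.
Variables (R : realType) (dx dy : nat).
Local Notation V := ('cV[R]_dx * 'cV[R]_dy)%type.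

Lemma differential_cvg (W : normedModType R) (F : V -> W) (p v : V) :
  differentiable F p ->
  (fun t : R => t^-1 *: (F (t *: v + p) - F p)) @ 0^' --> 'd F p v.
Proof. by move=> Fp; rewrite -deriveE //; apply: diff_derivable. Qed.

Lemma vdot_continuousl n (w : 'cV[R]_n) : continuous (fun u : 'cV[R]_n => vdot u w).
Proof.
have -> : (fun u : 'cV[R]_n => vdot u w) = fun u => \sum_i u i ord0 * w i ord0.
  by apply/funext => u; rewrite vdotE.
apply: continuous_big => [|i _ u]; first exact: add_continuous.
apply: (@continuousM R _ (fun u : 'cV[R]_n => u i ord0) (fun=> w i ord0)).
  exact: coord_continuous.
exact: cst_continuous.
Qed.

Lemma gradient_enorm_le (F : 'cV[R]_dx -> 'cV[R]_dy -> R) D L x y :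
  is_gradient F D -> lipschitz_xy F L -> 0 <= L -> enorm (D x y) <= L.
Proof.
move=> FD FL L0; have [Fdiff dF] := FD x y; set d := D x y.
have dir := @differential_cvg _ _ _ (usubmx d, dsubmx d) Fdiff.
rewrite dF /= /stack vsubmxK -enorm_sqr in dir.
have : enorm d ^+ 2 <= L * enorm d.
  apply: (ler_cvg_to dir (cvg_cst _)); near=> t.
  have t0 : t != 0 by near: t; exact: nbhs_dnbhs_neq.
  apply: le_trans (ler_norm _) _; rewrite normrZ normfV ler_pdivrMl ?normr_gt0 //.
  have := FL (t *: usubmx d + x) x (t *: dsubmx d + y) y.
  by rewrite !addrK /stack -scale_col_mx vsubmxK enormZ mulrCA.
have [->|dn0] := eqVneq (enorm d) 0; first by [].
by rewrite expr2 ler_pM2r // enorm_gt0.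
Unshelve. all: by end_near. Qed.

Lemma jacobian_op_bounded k (F : 'cV[R]_dx -> 'cV[R]_dy -> 'cV[R]_k) J L x y :
  is_jacobian F J -> lipschitz_xy_vec F L -> 0 <= L -> op_bounded (J x y) L.
Proof.
move=> FJ FL L0 h; have [Fdiff dF] := FJ x y; set w := J x y *m h.
have dir := @differential_cvg _ _ _ (usubmx h, dsubmx h) Fdiff.
rewrite dF /= /stack vsubmxK in dir.
have dir_w := cvg_comp _ _ dir (@vdot_continuousl _ w w).
have : enorm w ^+ 2 <= (L * enorm h) * enorm w.
  rewrite enorm_sqr; apply: (ler_cvg_to dir_w (cvg_cst _)); near=> t.
  have t0 : t != 0 by near: t; exact: nbhs_dnbhs_neq.
  apply: le_trans (vdot_le _ _) _; rewrite ler_wpM2r ?enorm_ge0 //.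
  rewrite enormZ normfV ler_pdivrMl ?normr_gt0 //.
  have := FL (t *: usubmx h + x) x (t *: dsubmx h + y) y.
  by rewrite !addrK /stack -scale_col_mx vsubmxK enormZ mulrCA.
have [->|wn0] := eqVneq (enorm w) 0; first by rewrite mulr_ge0 ?enorm_ge0.
by rewrite expr2 ler_pM2r // enorm_gt0.
Unshelve. all: by end_near. Qed.

Lemma lipschitz_const_ge0 (L : R) : (0 < dx)%N ->
  (forall (x x' : 'cV[R]_dx) (y : 'cV[R]_dy), 0 <= L * enorm (stack (x - x') (y - y))) ->
  0 <= L.
Proof.
move=> dx0 Lnn; pose z : 'cV[R]_dx := const_mx 1.
have zn0 : enorm z != 0.
  apply/eqP => /enorm_eq0 /matrixP /(_ (Ordinal dx0) ord0) /eqP.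
  by rewrite !mxE oner_eq0.
have := Lnn z 0 0; rewrite subr0 subrr /stack enorm_colmx0.
by rewrite pmulr_lge0 // enorm_gt0.
Qed.

Lemma lipschitz_xy_vec_y k (F : 'cV[R]_dx -> 'cV[R]_dy -> 'cV[R]_k) L x y1 y2 :
  lipschitz_xy_vec F L -> enorm (F x y1 - F x y2) <= L * enorm (y1 - y2).
Proof. by move=> FL; have := FL x x y1 y2; rewrite subrr /stack enorm_col0mx. Qed.

Lemma lipschitz_xy_mat_y k l (F : 'cV[R]_dx -> 'cV[R]_dy -> 'M[R]_(k, l)) L x y1 y2 :
  lipschitz_xy_mat F L -> op_bounded (F x y1 - F x y2) (L * enorm (y1 - y2)).
Proof.
move=> FL; apply: op_boundedW (op_bounded_specnorm _) _.
by have := FL x x y1 y2; rewrite subrr /stack enorm_col0mx.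
Qed.
End Differentials.

Section StrongConvexity.
Variable R : realType.

Lemma strongly_convex_first_order (phi : R -> R) (c a b dphi : R) :
  (forall s, 0 < s < 1 -> phi (a + s * (b - a))
     <= s * phi b + (1 - s) * phi a - c * s * (1 - s) * (b - a) ^+ 2) ->
  (fun s => s^-1 * (phi (a + s * (b - a)) - phi a)) @ 0^'+ --> (b - a) * dphi ->
  (b - a) * dphi <= phi b - phi a - c * (b - a) ^+ 2.
Proof.
(* Divide the convexity inequality by [s] and let [s] tend to [0+]. *)
move=> convex slope; set B := c * (b - a) ^+ 2.
have lim : (fun s => phi b - phi a - B + s * B) @ 0^'+ --> phi b - phi a - B + 0 * B.
  apply: cvgD; first exact: cvg_cst.
  by apply: cvgMr_tmp; apply: cvg_at_right_filter; exact: cvg_id.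
rewrite mul0r addr0 in lim.
apply: (ler_cvg_to slope lim); near=> s.
have s0 : 0 < s by near: s; exact: nbhs_right_gt.
have s1 : s < 1 by near: s; exact: nbhs_right_lt.
have := convex s; rewrite s0 s1 => /(_ isT) cvx.
rewrite ler_pdivrMl // /B; nra.
Unshelve. all: by end_near. Qed.

Section Hessian.
Variables (dx dy : nat) (G : 'cV[R]_dx -> 'cV[R]_dy -> R).
Variables (D : 'cV[R]_dx -> 'cV[R]_dy -> 'cV[R]_(dx + dy)).
Variables (H : 'cV[R]_dx -> 'cV[R]_dy -> 'M[R]_(dx + dy)).
Variables (mu : R) (x : 'cV[R]_dx) (y h : 'cV[R]_dy).
Hypotheses (GD : is_gradient G D) (DH : is_jacobian D H).
Hypothesis G_convex : strongly_convex_y (G x) mu.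

Let phi (t : R) := G x (t *: h + y).
Let psi (t : R) := vdot (D x (t *: h + y)) (col_mx 0 h).

Lemma strongly_convex_line (a b s : R) : 0 <= s <= 1 ->
  phi (a + s * (b - a)) <= s * phi b + (1 - s) * phi a
     - mu / 2 * enorm h ^+ 2 * s * (1 - s) * (b - a) ^+ 2.
Proof.
move=> s01; have := G_convex (b *: h + y) (a *: h + y) s01.
have -> : s *: (b *: h + y) + (1 - s) *: (a *: h + y) = (a + s * (b - a)) *: h + y.
  by apply/matrixP => i j; rewrite !mxE; ring.
have -> : b *: h + y - (a *: h + y) = (b - a) *: h.
  by apply/matrixP => i j; rewrite !mxE; ring.
rewrite enormZ exprMn real_normK ?num_real //.
have -> : mu / 2 * enorm h ^+ 2 * s * (1 - s) * (b - a) ^+ 2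
    = mu / 2 * s * (1 - s) * ((b - a) ^+ 2 * enorm h ^+ 2) by ring.
exact.
Qed.

Lemma line_slope_cvg (a c : R) :
  (fun s => s^-1 * (phi (a + s * c) - phi a)) @ 0^' --> c * psi a.
Proof.
have [Gdiff dG] := GD x (a *: h + y).
have := @differential_cvg _ _ _ _ _ _ (c *: ((0, h) : 'cV[R]_dx * 'cV[R]_dy)) Gdiff.
rewrite dG /= /stack -scale_col_mx vdotZr; apply: cvg_trans; apply: near_eq_cvg.
near=> s; rewrite /phi /= !scaler0 add0r scalerA scalerDl addrA.
by rewrite (addrC ((s * c) *: h)).
Unshelve. all: by end_near. Qed.

Lemma gradient_strongly_monotone (t : R) : 0 < t ->
  mu * enorm h ^+ 2 <= t^-1 * (psi t - psi 0).
Proof.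
(* Add the first-order inequalities at the two endpoints of [[0, t]]. *)
move=> t0; set c := mu / 2 * enorm h ^+ 2.
have first_order a b : (b - a) * psi a <= phi b - phi a - c * (b - a) ^+ 2.
  apply: strongly_convex_first_order.
    by move=> s /andP[s0 s1]; apply: strongly_convex_line; rewrite !ltW.
  exact/cvg_dnbhs_at_right/line_slope_cvg.
have := first_order 0 t; have := first_order t 0.
rewrite ler_pdivlMl // !subr0 !sub0r /c; nra.
Qed.

Lemma strongly_convex_hessian : mu * enorm h ^+ 2 <= vdot (drsubmx (H x y) *m h) h.
Proof.
have [Ddiff dD] := DH x y.
have := @differential_cvg _ _ _ _ _ _ ((0, h) : 'cV[R]_dx * 'cV[R]_dy) Ddiff.
rewrite dD /= /stack => dir.
have := cvg_dnbhs_at_right (cvg_comp _ _ dir (@vdot_continuousl _ _ (col_mx 0 h) _)).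
rewrite drsubmx_mul -vdot_col0mx => slope.
apply: (ler_cvg_to (cvg_cst _) slope); near=> t.
have t0 : 0 < t by near: t; exact: nbhs_right_gt.
rewrite /= vdotZl vdotBl scaler0 add0r.
by have := gradient_strongly_monotone t0; rewrite /psi scale0r add0r.
Unshelve. all: by end_near. Qed.
End Hessian.
End StrongConvexity.

Section Perturbation.
Variable R : realType.

Definition hyper_const (Lf0 Lf1 Lg1 Lg2 mu : R) :=
  Lf1 + Lg2 * Lf0 / mu + Lg2 * Lg1 * Lf0 / mu ^+ 2 + Lf1 * Lg1 / mu.

Lemma hyper_const_ge0 (Lf0 Lf1 Lg1 Lg2 mu : R) :
  0 <= Lf0 -> 0 <= Lf1 -> 0 <= Lg1 -> 0 <= Lg2 -> 0 < mu ->
  0 <= hyper_const Lf0 Lf1 Lg1 Lg2 mu.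
Proof.
move=> ? ? ? ? mu0; have mu_ge0 := ltW mu0.
by rewrite /hyper_const !addr_ge0 ?mulr_ge0 ?invr_ge0 ?exprn_ge0.
Qed.

Lemma sub_mulinvmx_perturbation m n (u1 u2 : 'cV[R]_m) (c1 c2 : 'cV[R]_n)
    (A1 A2 : 'M[R]_(m, n)) (M1 M2 : 'M[R]_n) (Lf0 Lf1 Lg1 Lg2 mu del : R) :
  0 < mu -> 0 <= Lf0 -> 0 <= Lf1 -> 0 <= Lg1 -> 0 <= Lg2 -> 0 <= del ->
  M1 \in unitmx -> M2 \in unitmx ->
  op_bounded (invmx M1) mu^-1 -> op_bounded (invmx M2) mu^-1 ->
  enorm c1 <= Lf0 -> enorm (u1 - u2) <= Lf1 * del -> enorm (c1 - c2) <= Lf1 * del ->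
  op_bounded (A1 - A2) (Lg2 * del) -> op_bounded (M1 - M2) (Lg2 * del) ->
  op_bounded A2 Lg1 ->
  enorm ((u1 - A1 *m invmx M1 *m c1) - (u2 - A2 *m invmx M2 *m c2))
    <= hyper_const Lf0 Lf1 Lg1 Lg2 mu * del.
Proof.
move=> mu0 Lf0_ge0 Lf1_ge0 Lg1_ge0 Lg2_ge0 del0 M1u M2u iM1 iM2 c1b du dc dA dM A2b.
have imu0 : 0 <= mu^-1 by rewrite invr_ge0 ltW.
have dinv : invmx M1 - invmx M2 = invmx M1 *m (- (M1 - M2)) *m invmx M2.
  by rewrite opprB mulmxBr mulmxBl -!mulmxA mulmxV // mulmx1 mulmxA mulVmx // mul1mx.
have split_diff : A1 *m invmx M1 *m c1 - A2 *m invmx M2 *m c2 =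
    (A1 - A2) *m (invmx M1 *m c1) + A2 *m ((invmx M1 - invmx M2) *m c1)
    + A2 *m (invmx M2 *m (c1 - c2)).
  rewrite !mulmxBl !mulmxBr !mulmxA.
  by apply/matrixP => i j; rewrite !mxE; ring.
have t1 : enorm ((A1 - A2) *m (invmx M1 *m c1)) <= (Lg2 * del) * (mu^-1 * Lf0).
  by apply: op_bounded_mul; [rewrite mulr_ge0 | exact: dA | exact: op_bounded_mul].
have t2 : enorm (A2 *m ((invmx M1 - invmx M2) *m c1))
    <= Lg1 * ((mu^-1 * (Lg2 * del) * mu^-1) * Lf0).
  apply: op_bounded_mul => //; rewrite dinv; apply: op_bounded_mul => //.
    by rewrite !mulr_ge0.
  apply: op_boundedM => //; first by rewrite !mulr_ge0.
  by apply: op_boundedM => //; exact: op_boundedN.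
have t3 : enorm (A2 *m (invmx M2 *m (c1 - c2))) <= Lg1 * (mu^-1 * (Lf1 * del)).
  by apply: op_bounded_mul => //; apply: op_bounded_mul.
have -> : (u1 - A1 *m invmx M1 *m c1) - (u2 - A2 *m invmx M2 *m c2) =
    (u1 - u2) - (A1 *m invmx M1 *m c1 - A2 *m invmx M2 *m c2).
  by apply/matrixP => i j; rewrite !mxE; ring.
apply: le_trans (enormB _ _) _; rewrite split_diff.
apply: le_trans (lerD du (le_trans (enormD _ _) (lerD (le_trans (enormD _ _)
  (lerD t1 t2)) t3))) _.
by rewrite /hyper_const le_eqVlt; apply/orP; left; apply/eqP; field; rewrite gt_eqF.
Qed.
End Perturbation.

Section Expectation.
Context d (T : measurableType d) (R : realType) (P : probability T R).

Lemma Rintegral_sum (I : Type) (r : seq I) (f : I -> T -> R) :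
  (forall i, P.-integrable setT (EFin \o f i)) ->
  Rintegral P setT (fun t => \sum_(i <- r) f i t) = \sum_(i <- r) Rintegral P setT (f i)
  /\ P.-integrable setT (EFin \o (fun t => \sum_(i <- r) f i t)).
Proof.
move=> fi; elim: r => [|i r [IHeq IHint]].
  rewrite big_nil; split.
    by under eq_Rintegral do rewrite big_nil; rewrite Rintegral_cst // mul0r.
  by apply: eq_integrable (integrable0 _ _) => // t _ /=; rewrite big_nil.
rewrite big_cons; split.
  by under eq_Rintegral do rewrite big_cons; rewrite RintegralD // IHeq.
by apply: eq_integrable (integrableD _ (fi i) IHint) => // t _ /=; rewrite big_cons EFinD.
Qed.

Lemma EvecB n (h1 h2 : T -> 'cV[R]_n) :
  (forall i, P.-integrable setT (fun t => (h1 t i ord0)%:E)) ->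
  (forall i, P.-integrable setT (fun t => (h2 t i ord0)%:E)) ->
  Evec P h1 - Evec P h2 = Evec P (fun t => h1 t - h2 t).
Proof.
move=> h1i h2i; apply/matrixP => i j; rewrite (ord1 j) !mxE -RintegralB ?h1i ?h2i //.
by apply: eq_Rintegral => t _; rewrite !mxE.
Qed.

Lemma enorm_Evec_le n (h : T -> 'cV[R]_n) (g : T -> R) (D : set T) (K : R) :
  measurable D -> P (~` D) = 0%E -> 0 <= K ->
  (forall i, P.-integrable setT (fun t => (h t i ord0)%:E)) ->
  P.-integrable setT (fun t => (g t)%:E) -> (forall t, 0 <= g t) ->
  (forall t, D t -> enorm (h t) <= K * g t) ->
  enorm (Evec P h) <= K * Rintegral P setT g.
Proof.
move=> mD PD K0 hi gi g0 hb; set c := Evec P h.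
have on_D (f : T -> R) : P.-integrable setT (EFin \o f) ->
    Rintegral P setT f = Rintegral P D f.
  move=> fi; rewrite /Rintegral (negligible_integral (measurableC mD) measurableT fi PD).
  by rewrite setTD setCK.
have hci (i : 'I_n) : P.-integrable setT (EFin \o (fun t => h t i ord0 * c i ord0)).
  by apply: eq_integrable (integrableZr _ _ (hi i)).
have [sumE sumI] := Rintegral_sum (index_enum 'I_n) hci.
have cc : vdot c c = Rintegral P setT (fun t => vdot (h t) c).
  under eq_Rintegral do rewrite vdotE.
  rewrite sumE vdotE; apply: eq_bigr => i _.
  by rewrite RintegralZr ?(hi i) // /c /Evec mxE.
have Kgi : P.-integrable setT (EFin \o (fun t => K * enorm c * g t)).
  by apply: eq_integrable (integrableZl _ (K * enorm c) gi).
(* Cauchy-Schwarz against [c] itself: [|c|^2 = E <h, c> <= K |c| E g]. *)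
have : enorm c ^+ 2 <= K * enorm c * Rintegral P setT g.
  rewrite enorm_sqr cc -RintegralZl // (on_D _ Kgi).
  under eq_Rintegral do rewrite vdotE.
  rewrite (on_D _ sumI); apply: le_Rintegral => //.
  - exact: integrableS sumI.
  - exact: integrableS Kgi.
  move=> t Dt /=; rewrite -vdotE; apply: le_trans (vdot_le _ _) _.
  by rewrite mulrAC ler_wpM2r ?enorm_ge0 ?hb.
have [->|cn0] := eqVneq (enorm c) 0.
  by rewrite mulr_ge0 // Rintegral_ge0 // => t _; exact: g0.
by rewrite expr2 mulrAC ler_pM2r // enorm_gt0.
Qed.
End Expectation.

Section PointwiseBound.
Variables (R : realType) (dx dy : nat).
Variables (f g : 'cV[R]_dx -> 'cV[R]_dy -> R).
Variables (Df Dg : 'cV[R]_dx -> 'cV[R]_dy -> 'cV[R]_(dx + dy)).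
Variable Hg : 'cV[R]_dx -> 'cV[R]_dy -> 'M[R]_(dx + dy).
Variables (Lf0 Lf1 Lg1 Lg2 mu : R).
Hypothesis dx_gt0 : (0 < dx)%N.
Hypotheses (fDf : is_gradient f Df) (gDg : is_gradient g Dg) (DgHg : is_jacobian Dg Hg).
Hypotheses (f_lip : lipschitz_xy f Lf0) (Df_lip : lipschitz_xy_vec Df Lf1).
Hypotheses (Dg_lip : lipschitz_xy_vec Dg Lg1) (Hg_lip : lipschitz_xy_mat Hg Lg2).
Hypothesis mu_gt0 : 0 < mu.

Lemma lipschitz_consts_ge0 : [/\ 0 <= Lf0, 0 <= Lf1, 0 <= Lg1 & 0 <= Lg2].
Proof.
split; apply: lipschitz_const_ge0 dx_gt0 _ => x x' y.
- exact: le_trans (normr_ge0 _) (f_lip _ _ _ _).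
- exact: le_trans (enorm_ge0 _) (Df_lip _ _ _ _).
- exact: le_trans (enorm_ge0 _) (Dg_lip _ _ _ _).
- exact: le_trans (specnorm_ge0 _) (Hg_lip _ _ _ _).
Qed.

Lemma hyper_integrand_lipschitz x y1 y2 : strongly_convex_y (g x) mu ->
  enorm (hyper_integrand (Df x y1) (Hg x y1) - hyper_integrand (Df x y2) (Hg x y2))
    <= hyper_const Lf0 Lf1 Lg1 Lg2 mu * enorm (y1 - y2).
Proof.
move=> g_convex; have [Lf0_ge0 Lf1_ge0 Lg1_ge0 Lg2_ge0] := lipschitz_consts_ge0.
have Hg_inv y : drsubmx (Hg x y) \in unitmx /\
    op_bounded (invmx (drsubmx (Hg x y))) mu^-1.
  by apply: coercive_invmx => // h; exact: strongly_convex_hessian gDg DgHg g_convex.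
have [U1 B1] := Hg_inv y1; have [U2 B2] := Hg_inv y2.
have dHg := lipschitz_xy_mat_y x y1 y2 Hg_lip.
apply: sub_mulinvmx_perturbation => //.
- exact: enorm_ge0.
- by apply: le_trans (enorm_dsubmx _) _; exact: gradient_enorm_le fDf f_lip _.
- rewrite -raddfB; apply: le_trans (enorm_usubmx _) _.
  exact: lipschitz_xy_vec_y.
- rewrite -raddfB; apply: le_trans (enorm_dsubmx _) _.
  exact: lipschitz_xy_vec_y.
- by rewrite /ursubmx -!raddfB; exact: op_bounded_ursubmx.
- by rewrite /drsubmx -!raddfB; exact: op_bounded_drsubmx.
- by apply: op_bounded_ursubmx; exact: jacobian_op_bounded DgHg Dg_lip _.
Qed.
End PointwiseBound.

Theorem proposition1
  (R : realType) (dx dy N : nat) (d1 d2 : measure_display)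
  (T1 : measurableType d1) (T2 : measurableType d2)
  (P : probability (T1 * T2)%type R) (Pc : T1 -> probability T2 R)
  (Xi : set T1)
  (f g : 'cV[R]_dx -> 'cV[R]_dy -> T1 -> T2 -> R)
  (Df Dg : 'cV[R]_dx -> 'cV[R]_dy -> T1 -> T2 -> 'cV[R]_(dx + dy))
  (Hf Hg : 'cV[R]_dx -> 'cV[R]_dy -> T1 -> T2 -> 'M[R]_(dx + dy))
  (Lf0 Lf1 Lg1 Lg2 mu sf sg1 sg2 : R)
  (ystar : 'cV[R]_dx -> T1 -> 'cV[R]_dy)
  (Phi : T1 -> 'cV[R]_N) (Wstar : 'cV[R]_dx -> 'M[R]_(dy, N)) :
  (0 < dx)%N -> (0 < dy)%N -> (0 < N)%N ->
  measurable Xi -> P (Xi `*` setT) = 1%E ->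
  (forall A B, measurable A -> measurable B ->
     P (A `*` B) = (\int[P]_(p in A `*` setT) Pc p.1 B)%E) ->
  (forall xi eta, Xi xi ->
     is_gradient (fun x y => f x y xi eta) (fun x y => Df x y xi eta) /\
     is_jacobian (fun x y => Df x y xi eta) (fun x y => Hf x y xi eta) /\
     is_gradient (fun x y => g x y xi eta) (fun x y => Dg x y xi eta) /\
     is_jacobian (fun x y => Dg x y xi eta) (fun x y => Hg x y xi eta)) ->
  (forall xi eta, Xi xi ->
     lipschitz_xy (fun x y => f x y xi eta) Lf0 /\
     lipschitz_xy_vec (fun x y => Df x y xi eta) Lf1 /\
     lipschitz_xy_vec (fun x y => Dg x y xi eta) Lg1 /\
     lipschitz_xy_mat (fun x y => Hg x y xi eta) Lg2) ->
  0 < mu ->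
  (forall x xi eta, Xi xi -> strongly_convex_y (fun y => g x y xi eta) mu) ->
  (forall xi, Xi xi ->
     is_gradient (fun x y => Rintegral (Pc xi) setT (f x y xi))
                 (fun x y => Evec (Pc xi) (Df x y xi)) /\
     is_gradient (fun x y => Rintegral (Pc xi) setT (g x y xi))
                 (fun x y => Evec (Pc xi) (Dg x y xi)) /\
     is_jacobian (fun x y => Evec (Pc xi) (Dg x y xi))
                 (fun x y => Emat (Pc xi) (Hg x y xi))) ->
  (forall x y xi, Xi xi ->
     (\int[Pc xi]_eta ((enorm (Df x y xi eta - Evec (Pc xi) (Df x y xi))) ^+ 2)%:E
        <= (sf ^+ 2)%:E)%E /\
     (\int[Pc xi]_eta ((enorm (Dg x y xi eta - Evec (Pc xi) (Dg x y xi))) ^+ 2)%:E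
        <= (sg1 ^+ 2)%:E)%E /\
     (\int[Pc xi]_eta ((specnorm (Hg x y xi eta - Emat (Pc xi) (Hg x y xi))) ^+ 2)%:E
        <= (sg2 ^+ 2)%:E)%E) ->
  (forall x xi, Xi xi -> forall y,
     Rintegral (Pc xi) setT (g x (ystar x xi) xi)
       <= Rintegral (Pc xi) setT (g x y xi)) ->
  (forall x (W : 'M[R]_(dy, N)),
     Rintegral P setT (fun p => g x (Wstar x *m Phi p.1) p.1 p.2)
       <= Rintegral P setT (fun p => g x (W *m Phi p.1) p.1 p.2)) ->
  forall x : 'cV[R]_dx,
  P.-integrable setT (fun p => (enorm (Wstar x *m Phi p.1 - ystar x p.1))%:E) ->
  (forall i, P.-integrable setT (fun p =>
     (hyper_integrand (Df x (ystar x p.1) p.1 p.2)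
                      (Hg x (ystar x p.1) p.1 p.2) i ord0)%:E)) ->
  (forall i, P.-integrable setT (fun p =>
     (hyper_integrand (Df x (Wstar x *m Phi p.1) p.1 p.2)
                      (Hg x (Wstar x *m Phi p.1) p.1 p.2) i ord0)%:E)) ->
  enorm (hypergrad P Df Hg (ystar x) x
         - hypergrad P Df Hg (fun xi => Wstar x *m Phi xi) x)
    <= (Lf1 + Lg2 * Lf0 / mu + Lg2 * Lg1 * Lf0 / mu ^+ 2 + Lf1 * Lg1 / mu)
       * Rintegral P setT (fun p => enorm (Wstar x *m Phi p.1 - ystar x p.1)).
Proof.
move=> dx_gt0 _ _ mXi PXi _ fg_diff fg_lip mu_gt0 g_convex _ _ _ _ x dist_int y1_int y2_int.
set D := Xi `*` [set: T2].
have mD : measurable D by exact: measurableX.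
have PD0 : P (~` D) = 0%E by rewrite probability_setC // PXi -EFinB subrr.
have [[xi0 eta0] [Xxi0 _]] : D !=set0.
  apply/set0P/negP => /eqP D0; move: PXi; rewrite -/D D0 measure0 => -[] /eqP.
  by rewrite eq_sym oner_eq0.
have K_ge0 : 0 <= hyper_const Lf0 Lf1 Lg1 Lg2 mu.
  have [f_lip [Df_lip [Dg_lip Hg_lip]]] := fg_lip xi0 eta0 Xxi0.
  have [? ? ? ?] := lipschitz_consts_ge0 dx_gt0 f_lip Df_lip Dg_lip Hg_lip.
  exact: hyper_const_ge0.
rewrite /hypergrad EvecB //; apply: (enorm_Evec_le mD PD0 K_ge0) => //.
- move=> i; apply: eq_integrable (integrableB _ (y1_int i) (y2_int i)) => // p _ /=.
  by rewrite !mxE EFinD EFinN.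
- by move=> p; exact: enorm_ge0.
move=> [xi eta] [/= Xxi _]; rewrite -enormN opprB.
have [fDf [_ [gDg DgHg]]] := fg_diff xi eta Xxi.
have [f_lip [Df_lip [Dg_lip Hg_lip]]] := fg_lip xi eta Xxi.
apply: (hyper_integrand_lipschitz dx_gt0 fDf gDg DgHg f_lip Df_lip Dg_lip Hg_lip mu_gt0).
exact: g_convex.
Qed.
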